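(* Let $r$ and $d$ be positive integers, let $\operatorname{Tv}(d,r)=(d+1)(r-1)+1$, and let $S$ be a set of $n>\operatorname{Tv}(d,r)$ points in $\mathbb{R}^d$. Then every vertex $v$ of the Tverberg $r$-partition graph $G_T[S,r]$ satisfies \[\big(n+1-\operatorname{Tv}(d,r)\big)(r-1)\le \deg(v)\le n(r-1).\]
   Context: A partition of a finite set $S$ into $r$ parts is a collection of $r$ nonempty pairwise disjoint subsets $P_1,\dots,P_r$ (unordered) whose union is $S$. For a finite $S\subset\mathbb{R}^d$, a Tverberg partition of $S$ into $r$ parts is a partition $P_1,\dots,P_r$ of $S$ into $r$ parts with $\bigcap_{j=1}^r\operatorname{conv}(P_j)\neq\emptyset$. For two partitions $P,P'$ of $S$, the partition distance $D(P,P')$ is the minimum number of elements of $S$ that must be removed so that $P$ and $P'$ restricted to the remaining elements coincide. The Tverberg $r$-partition graph $G_T[S,r]$ has as vertices all Tverberg partitions of $S$ into $r$ parts, with an edge between $P$ and $P'$ if and only if $D(P,P')=1$. *)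

(* Points of S are indexed by 'I_n via an injective map
   p : 'I_n -> 'rV[R]_d (R : realType models the reals). *)
From mathcomp Require Import all_boot all_order all_algebra.
From mathcomp Require Import boolp reals.
Set Implicit Arguments. Unset Strict Implicit. Unset Printing Implicit Defensive.
Import Order.TTheory GRing.Theory Num.Theory.
Local Open Scope ring_scope.

Section Tverberg.
Variables (R : realType) (d n : nat) (p : 'I_n -> 'rV[R]_d).

Definition in_conv (A : {set 'I_n}) (x : 'rV[R]_d) : Prop :=
  exists w : 'I_n -> R,
    [/\ forall i, 0 <= w i,
        forall i, i \notin A -> w i = 0,
        \sum_i w i = 1
      & x = \sum_i w i *: p i].

Definition is_rpartition (r : nat) (P : {set {set 'I_n}}) : bool :=
  partition P [set: 'I_n] && (#|P| == r)%N.

Definition tverberg_partition (r : nat) (P : {set {set 'I_n}}) : Prop :=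
  is_rpartition r P /\ exists x : 'rV[R]_d, forall B, B \in P -> in_conv B x.

End Tverberg.

Definition restr_part n (T : {set 'I_n}) (P : {set {set 'I_n}}) : {set {set 'I_n}} :=
  [set B :&: T | B in P] :\ set0.

Definition part_dist n (P Q : {set {set 'I_n}}) : nat :=
  #|[arg min_(X < [set: 'I_n] | restr_part (~: X) P == restr_part (~: X) Q) #|X| ]|.

Definition tv_degree (R : realType) d n (p : 'I_n -> 'rV[R]_d) (r : nat)
  (P : {set {set 'I_n}}) : nat :=
  #|[set Q : {set {set 'I_n}} | `[< tverberg_partition p r Q >] && (part_dist P Q == 1)%N]|.

Definition Tv (d r : nat) : nat := ((d.+1) * (r - 1)).+1.

(* A Tverberg partition P comes with weights l that write a common point x as a
   convex combination inside every block.  If l vanishes at a point i, moving i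
   into any other block B keeps (l, x) a witness, so every such move is a
   neighbour of P; conversely every neighbour is obtained by moving a single
   point into another block, whence the upper bound n(r-1).
   For the lower bound, take weights whose support carries no nonzero
   direction (m, y) of the linear system defining them: since the system has
   (d+1)r equations in n+d unknowns, such a support has at most Tv(d,r)
   points.  If it has exactly Tv(d,r) points, adding any outside point z
   creates a direction through z, and walking along it zeroes one point of the
   support.  Either way all points outside a set C with |C| < Tv(d,r) carry
   zero weight in some witness, and their (n - |C|)(r-1) moves are pairwise
   distinct neighbours. *)

From mathcomp Require Import all_boot all_order all_algebra.
From mathcomp Require Import reals.
From mathcomp Require Import boolp zify.
Set Implicit Arguments. Unset Strict Implicit. Unset Printing Implicit Defensive.
Import Order.TTheory GRing.Theory Num.Theory.

Section PreimPartition.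
Variables (T : finType) (rT : eqType).
Implicit Types (f g : T -> rT) (D : {set T}).

Lemma eq_preim_partitionP f g D :
  preim_partition f D = preim_partition g D <->
  {in D &, forall x y, (f x == f y) = (g x == g y)}.
Proof.
split=> [E x y Dx Dy | H]; last first.
  apply: eq_in_imset => x Dx; apply/setP => y; rewrite !inE.
  by case Dy: (y \in D) => //=; apply: H.
have : [set z in D | f x == f z] \in preim_partition g D.
  by rewrite -E; apply: imset_f.
case/imsetP => z Dz /setP Ez.
have := Ez x; rewrite !inE Dx eqxx => /esym/andP[_ /eqP <-].
by have := Ez y; rewrite !inE Dy.
Qed.

Lemma eq_preim_partitionTP f g :
  preim_partition f setT = preim_partition g setT <->
  forall x y, (f x == f y) = (g x == g y).
Proof.
split=> [/eq_preim_partitionP fg x y | fg]; first exact: fg (in_setT x) (in_setT y).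
by apply/eq_preim_partitionP => x y _ _; apply: fg.
Qed.

Lemma card_preim_partition (U : finType) (f : T -> U) D :
  #|preim_partition f D| = #|f @: D|.
Proof.
have -> : preim_partition f D = (fun v => [set y in D | v == f y]) @: (f @: D).
  by rewrite -imset_comp.
apply: card_in_imset => _ _ /imsetP[a Da ->] /imsetP[b Db ->] /setP/(_ a).
by rewrite !inE Da eqxx => /esym/eqP.
Qed.

End PreimPartition.

Section Restriction.
Variable n : nat.
Implicit Types (P Q : {set {set 'I_n}}) (T X : {set 'I_n}).

Lemma restr_part_set0 P : restr_part set0 P = set0.
Proof.
apply/setP => C; rewrite /restr_part !inE; apply/andP => -[C0 /imsetP[B _ EC]].
by rewrite EC setI0 eqxx in C0.
Qed.

Lemma restr_part_setT P : set0 \notin P -> restr_part setT P = P.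
Proof.
move=> P0; apply/setP => C; rewrite /restr_part !inE; apply/andP/idP => [[_]|PC].
  by case/imsetP => B PB ->; rewrite setIT.
split; first by apply: contraNneq P0 => <-.
by apply/imsetP; exists C; rewrite ?setIT.
Qed.

Lemma restr_preim_partition (U : eqType) (f : 'I_n -> U) T :
  restr_part T (preim_partition f setT) = preim_partition f T.
Proof.
apply/setP => C; rewrite /restr_part; apply/idP/imsetP.
- rewrite !inE => /andP[C0 /imsetP[_ /imsetP[x _ ->] EC]]; subst C.
  case/set0Pn: C0 => y /[!inE] /andP[/eqP fxy Ty].
  by exists y => //; apply/setP => z; rewrite !inE fxy andbC.
- move=> [x Tx ->]; rewrite !inE; apply/andP; split.
    by apply/set0Pn; exists x; rewrite !inE Tx eqxx.
  apply/imsetP; exists [set y in setT | f x == f y]; first exact: imset_f.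
  by apply/setP => z; rewrite !inE andbC.
Qed.

Lemma restr_part_pblock P T :
  partition P setT -> restr_part T P = preim_partition (pblock P) T.
Proof.
by move=> partP; rewrite -{1}(preim_partition_pblock partP) restr_preim_partition.
Qed.

Lemma restr_part_eqP P Q T : partition P setT -> partition Q setT ->
  restr_part T P = restr_part T Q <->
  {in T &, forall x y, (pblock P x == pblock P y) = (pblock Q x == pblock Q y)}.
Proof.
by move=> partP partQ; rewrite !restr_part_pblock //; apply: eq_preim_partitionP.
Qed.

Lemma part_distP P Q :
  exists X, [/\ part_dist P Q = #|X|, restr_part (~: X) P = restr_part (~: X) Q &
    forall Y, restr_part (~: Y) P = restr_part (~: Y) Q -> #|X| <= #|Y|].
Proof.
rewrite /part_dist; case: arg_minnP; first by rewrite setCT !restr_part_set0.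
by move=> X /eqP PQX minX; exists X; split=> // Y /eqP; apply: minX.
Qed.

Lemma part_dist_eq1 P Q : set0 \notin P -> set0 \notin Q ->
  part_dist P Q = 1 <->
  P != Q /\ exists i, restr_part (~: [set i]) P = restr_part (~: [set i]) Q.
Proof.
move=> P0 Q0; have [X [-> PQX minX]] := part_distP P Q.
split=> [/eqP/cards1P[i X1] | [PQ [i PQi]]].
  split; last by exists i; rewrite -X1.
  apply: contraTneq isT => PQ; have := minX set0.
  by rewrite PQ cards0 X1 cards1 => /(_ erefl).
apply/eqP; rewrite eqn_leq (leq_trans (minX _ PQi)) ?cards1 // lt0n cards_eq0.
apply: contraNneq PQ => X0; move: PQX.
by rewrite X0 setC0 !restr_part_setT // => ->.
Qed.

End Restriction.

Section Moves.
Variables (n : nat) (P : {set {set 'I_n}}).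
Implicit Types (i j a : 'I_n) (B : {set 'I_n}).

Definition move_label i B k := if k == i then B else pblock P k.

Definition move_part i B := preim_partition (move_label i B) setT.

Definition move_pairs (C : {set 'I_n}) :=
  [set x : 'I_n * {set 'I_n} | (x.1 \in C) && (x.2 \in P :\ pblock P x.1)].

Lemma big_move_label (V : nmodType) (F : 'I_n -> V) i B W : F i = 0%R ->
  (\sum_(k | move_label i B k == W) F k = \sum_(k | pblock P k == W) F k)%R.
Proof.
move=> Fi0; rewrite big_mkcond [RHS]big_mkcond; apply: eq_bigr => k _.
have [->|ki] := eqVneq k i; first by rewrite Fi0; do 2 case: ifP.
by rewrite /move_label (negbTE ki).
Qed.

Lemma move_label_id i B : move_label i B i = B.
Proof. by rewrite /move_label eqxx. Qed.

Lemma move_label_neq i B k : k != i -> move_label i B k = pblock P k.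
Proof. by rewrite /move_label => /negbTE ->. Qed.

Hypothesis partP : partition P setT.

Let tiP : trivIset P. Proof. by case/and3P: partP. Qed.
Let P0 : set0 \notin P. Proof. by case/and3P: partP. Qed.
Let in_cover k : k \in cover P. Proof. by case/and3P: partP => /eqP ->. Qed.

Lemma pblockT k : pblock P k \in P. Proof. exact/pblock_mem/in_cover. Qed.


Lemma exists_mem_block B : B \in P -> exists2 b, b \in B & pblock P b = B.
Proof.
move=> PB; case/set0Pn: (memPn P0 B PB) => b Bb.
by exists b; last exact: def_pblock tiP PB Bb.
Qed.

Lemma move_part_agree i B :
  restr_part (~: [set i]) P = restr_part (~: [set i]) (move_part i B).
Proof.
rewrite restr_part_pblock // restr_preim_partition.
apply/eq_preim_partitionP => x y /[!inE] xi yi.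
by rewrite (move_label_neq _ xi) (move_label_neq _ yi).
Qed.

Lemma imset_move_label i B a : a != i -> pblock P a = pblock P i ->
  move_label i B @: setT = B |: P.
Proof.
move=> ai Eai; apply/setP => V; apply/imsetP/setU1P.
- by case=> k _ ->; rewrite /move_label; case: eqP => _; [left | right; apply: pblockT].
- case=> [->|PV]; first by exists i; rewrite ?/move_label ?eqxx.
  have [v Vv <-] := exists_mem_block PV.
  have [-> | vi] := eqVneq v i; first by exists a; rewrite ?/move_label ?(negbTE ai).
  by exists v; rewrite ?/move_label ?(negbTE vi).
Qed.

Lemma card_move_part i B a : B \in P -> a != i -> pblock P a = pblock P i ->
  #|move_part i B| = #|P|.
Proof.
move=> PB ai Eai; rewrite card_preim_partition (imset_move_label _ ai Eai).
by have /setUidPr -> : [set B] \subset P by rewrite sub1set.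
Qed.

Lemma part_dist_move_part i B : B \in P -> B != pblock P i ->
  part_dist P (move_part i B) = 1%N.
Proof.
move=> PB BPi; have [b _ Eb] := exists_mem_block PB.
have bi : b != i by apply: contra_neq BPi => bi; rewrite -Eb bi.
apply/part_dist_eq1 => //; first by case/and3P: (preim_partitionP (move_label i B) setT).
split; last by exists i; apply: move_part_agree.
apply: contra_neq BPi => PB'.
have /eq_preim_partitionTP/(_ b i) : preim_partition (pblock P) setT = move_part i B.
  by rewrite preim_partition_pblock.
by rewrite move_label_id (move_label_neq _ bi) Eb eqxx => /eqP.
Qed.

Lemma move_part_id i : move_part i (pblock P i) = P.
Proof.
rewrite -[RHS](preim_partition_pblock partP); apply/eq_preim_partitionTP => x y.
by rewrite /move_label; case: (x =P i) => [->|_]; case: (y =P i) => [->|_].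
Qed.

Lemma move_part_inj i j B B' a :
  B \in P -> B != pblock P i -> a != i -> pblock P a = pblock P i ->
  move_part i B = move_part j B' -> (i, B) = (j, B').
Proof.
move=> PB Bi ai Eai /eq_preim_partitionTP same.
have [b _ Eb] := exists_mem_block PB.
have bi : b != i by apply: contra_neq Bi => bi; rewrite -Eb bi.
have := same b i; rewrite move_label_id (move_label_neq _ bi) Eb eqxx.
have [<- | ij] := eqVneq i j.
  by rewrite (move_label_neq _ bi) move_label_id Eb => /esym/eqP ->.
rewrite (move_label_neq _ ij) => same_bi.
have := same a i; rewrite move_label_id (move_label_neq _ ai) Eai eq_sym (negbTE Bi).
rewrite (move_label_neq _ ij); have [aj | aj] := eqVneq a j; last first.
  by rewrite (move_label_neq _ aj) Eai eqxx.
have ba : b != a by apply: contra_neq Bi => ba; rewrite -Eb ba Eai.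
by move: same_bi; rewrite -aj (move_label_neq _ ba) Eb (negbTE Bi).
Qed.

Lemma move_part_of_agree Q i B : partition Q setT ->
    {in ~: [set i] &, forall x y,
      (pblock P x == pblock P y) = (pblock Q x == pblock Q y)} ->
    (forall y, y != i -> (pblock Q i == pblock Q y) = (B == pblock P y)) ->
  Q = move_part i B.
Proof.
move=> partQ agree Qi.
rewrite -(preim_partition_pblock partQ); apply/eq_preim_partitionTP => x y.
have [-> | xi] := eqVneq x i; have [-> | yi] := eqVneq y i;
  rewrite ?move_label_id ?eqxx ?(move_label_neq _ xi) ?(move_label_neq _ yi) //.
- exact: Qi.
- by rewrite eq_sym Qi // eq_sym.
- by rewrite agree ?inE.
Qed.

Lemma part_dist1_move Q : partition Q setT -> #|Q| = #|P| -> part_dist P Q = 1%N ->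
  exists2 x, x \in move_pairs setT & Q = move_part x.1 x.2.
Proof.
move=> partQ cardQ; have [_ _ Q0] := and3P partQ.
case/part_dist_eq1 => // PQ [i /(restr_part_eqP _ partP partQ) agree].
have Q_move := move_part_of_agree partQ agree.
have [y0 /andP[y0i /eqP Qy0] | Qi_alone] :=
  pickP (fun y => (y != i) && (pblock Q y == pblock Q i)).
  have EQ : Q = move_part i (pblock P y0).
    by apply: Q_move => y yi; rewrite -Qy0 agree ?inE.
  exists (i, pblock P y0) => //; rewrite !inE /= pblockT andbT.
  by apply: contra_neq PQ => Ey0; rewrite EQ Ey0 move_part_id.
have {}Qi_alone y : y != i -> (pblock Q i == pblock Q y) = false.
  by move=> yi; have := Qi_alone y; rewrite yi eq_sym.
have [a /andP[ai /eqP Eai] | Pi_alone] :=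
  pickP (fun a => (a != i) && (pblock P a == pblock P i)).
  (* [set0] is not a block, so [move_part i set0] splits [i] off as a singleton. *)
  have EQ : Q = move_part i set0.
    apply: Q_move => y yi; rewrite Qi_alone //; apply/esym/eqP => E.
    by move: (pblockT y); rewrite -E (negbTE P0).
  move: cardQ; rewrite EQ card_preim_partition (imset_move_label _ ai Eai).
  by rewrite cardsU1 P0 add1n => /esym/n_Sn.
suff EQ : Q = move_part i (pblock P i) by rewrite EQ move_part_id eqxx in PQ.
apply: Q_move => y yi; rewrite Qi_alone //; apply/esym/negbTE.
by move: (Pi_alone y) => /=; rewrite yi eq_sym => /negbT.
Qed.

Lemma card_move_pairs C : #|move_pairs C| = (#|C| * (#|P| - 1))%N.
Proof.
rewrite -sum1_card (eq_bigl (fun x => (x.1 \in C) && (x.2 \in P :\ pblock P x.1)));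
  last by move=> x; rewrite inE.
rewrite -(pair_big_dep (mem C) (fun i B => B \in P :\ pblock P i) (fun _ _ => 1%N)) /=.
rewrite -sum_nat_const; apply: eq_bigr => i _; rewrite sum1_card.
by rewrite (cardsD1 (pblock P i) P) pblockT add1n subn1.
Qed.

Lemma move_part_inj_on (D : {set 'I_n}) :
  {in D, forall i, exists2 a, a != i & pblock P a = pblock P i} ->
  {in move_pairs D &, injective (fun x => move_part x.1 x.2)}.
Proof.
move=> partner [i B] [j B'] /[!inE] /and3P[iD BPi PB] _.
have [a ai gai] := partner i iD.
exact: move_part_inj PB BPi ai gai.
Qed.

End Moves.

Section FiberWeights.
Local Open Scope ring_scope.

Lemma underdetermined_solution (F : fieldType) (U E : finType) (A : E -> U -> F) :
  (#|E| < #|U|)%N ->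
  exists2 v : U -> F, exists u, v u != 0 & forall e, \sum_u v u * A e u = 0.
Proof.
move=> EU; pose M : 'M[F]_(#|U|, #|E|) := \matrix_(i, j) A (enum_val j) (enum_val i).
have : kermx M != 0.
  rewrite -mxrank_eq0 mxrank_ker -lt0n subn_gt0.
  exact: leq_ltn_trans (rank_leq_col M) EU.
case/rowV0Pn => w; rewrite sub_kermx => /eqP Mw /rV0Pn[j wj].
exists (fun u => w 0 (enum_rank u)); first by exists (enum_val j); rewrite enum_valK.
move=> e; move/matrixP: Mw => /(_ 0 (enum_rank e)); rewrite !mxE => Mw_e.
rewrite -[RHS]Mw_e.
rewrite (reindex (@enum_val U U)) /=; last exact/onW_bij/enum_val_bij.
by apply: eq_bigr => k _; rewrite enum_valK !mxE enum_rankK.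
Qed.

Variables (R : realType) (d n : nat) (p : 'I_n -> 'rV[R]_d).
Implicit Types (g : 'I_n -> {set 'I_n}) (l m : 'I_n -> R) (x y : 'rV[R]_d).

(* The points of each fiber of [g] are weighted by [l] so as to have
   barycenter [x]; for [g = pblock P] this certifies that [P] is a Tverberg
   partition with Tverberg point [x]. *)
Definition fiber_weights g l x :=
  [/\ forall k, 0 <= l k,
      forall j, \sum_(k | g k == g j) l k = 1 &
      forall j, \sum_(k | g k == g j) l k *: p k = x].

Definition fiber_direction g m y :=
  (forall j, \sum_(k | g k == g j) m k = 0) /\
  (forall j, \sum_(k | g k == g j) m k *: p k = y).

Lemma in_conv_fiber_weights g l x : fiber_weights g l x ->
  forall C, C \in preim_partition g setT -> in_conv p C x.
Proof.
case=> l_ge0 l_sum1 l_sumx _ /imsetP[j _ ->].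
exists (fun k => if g j == g k then l k else 0); split.
- by move=> k; case: ifP.
- by move=> k; rewrite !inE /=; case: ifP.
- by rewrite -(l_sum1 j) [RHS]big_mkcond; apply: eq_bigr => k _; rewrite eq_sym.
- rewrite -(l_sumx j) big_mkcond; apply: eq_bigr => k _; rewrite eq_sym.
  by case: ifP; rewrite ?scale0r.
Qed.

Lemma fiber_weights_pblock (P : {set {set 'I_n}}) : partition P setT ->
  (exists x, forall B, B \in P -> in_conv p B x) ->
  exists l x, fiber_weights (pblock P) l x.
Proof.
move=> partP [x Px].
have /choice[w wP] : forall B, exists w : 'I_n -> R, B \in P ->
    [/\ forall i, 0 <= w i, forall i, i \notin B -> w i = 0,
        \sum_i w i = 1 & x = \sum_i w i *: p i].
  move=> B; case: (boolP (B \in P)) => PB; last by exists (fun _ => 0).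
  by have [w wP] := Px B PB; exists w.
have [_ tiP _] := and3P partP.
have w_out j k : pblock P k != pblock P j -> w (pblock P j) k = 0.
  case: (wP _ (pblockT partP j)) => _ w0 _ _ kj; apply: w0.
  by apply: contra kj => kin; rewrite (def_pblock tiP (pblockT partP j) kin).
exists (fun k => w (pblock P k) k), x; split.
- by move=> k; case: (wP _ (pblockT partP k)).
- move=> j; case: (wP _ (pblockT partP j)) => _ _ <- _.
  rewrite big_mkcond; apply: eq_bigr => k _.
  by case: eqP => [-> // | /eqP kj]; rewrite w_out.
- move=> j; case: (wP _ (pblockT partP j)) => _ _ _ ->.
  rewrite big_mkcond; apply: eq_bigr => k _.
  by case: eqP => [-> // | /eqP kj]; rewrite w_out ?scale0r.
Qed.

Lemma fiber_weights_move P l x i B : partition P setT ->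
  fiber_weights (pblock P) l x -> l i = 0 -> B \in P ->
  fiber_weights (move_label P i B) l x.
Proof.
move=> partP [l_ge0 l_sum1 l_sumx] li PB.
have [b _ Eb] := exists_mem_block partP PB.
have label_pblock j : exists j', move_label P i B j = pblock P j'.
  by rewrite /move_label; case: eqP => _; [exists b | exists j].
split=> // j; have [j' ->] := label_pblock j.
- by rewrite big_move_label.
- by rewrite big_move_label ?li ?scale0r.
Qed.

Lemma fiber_directionN g m y :
  fiber_direction g m y -> fiber_direction g (fun k => - m k) (- y).
Proof.
case=> m_sum0 m_sumy; split=> j; first by rewrite sumrN m_sum0 oppr0.
by rewrite -(m_sumy j) -sumrN; apply: eq_bigr => k _; rewrite scaleNr.
Qed.

Lemma fiber_direction_gt0 g m y k0 : fiber_direction g m y -> m k0 < 0 ->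
  exists k, 0 < m k.
Proof.
case=> m_sum0 _ mk0; apply/existsP; apply: contraT; rewrite negb_exists.
move=> /forallP m_le0; have := m_sum0 k0; rewrite (bigD1 k0) //= => /eqP.
rewrite lt_eqF // -[0 in X in _ < X]addr0 ltr_leD //.
by apply: sumr_le0 => k _; rewrite leNgt m_le0.
Qed.

Lemma fiber_weights_step g l x m y : fiber_weights g l x -> fiber_direction g m y ->
    (exists k, 0 < m k) -> (forall k, 0 < m k -> 0 < l k) ->
  exists t, exists2 i0, 0 < m i0 /\ l i0 - t * m i0 = 0 &
    fiber_weights g (fun k => l k - t * m k) (x - t *: y).
Proof.
move=> [l_ge0 l_sum1 l_sumx] [m_sum0 m_sumy] [k1 mk1] l_gt0.
have [i0 mi0 i0_min] := @arg_minP _ _ _ k1 (fun k => 0 < m k) (fun k => l k / m k) mk1.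
have li0 := l_gt0 _ mi0.
exists (l i0 / m i0), i0; first by rewrite divfK ?subrr ?gt_eqF.
split.
- move=> k; rewrite subr_ge0; case: (ltP 0 (m k)) => mk.
    by rewrite -ler_pdivlMr //; apply: i0_min.
  apply: le_trans (l_ge0 k); apply: mulr_ge0_le0 => //.
  by rewrite divr_ge0 // ltW.
- by move=> j; rewrite sumrB -mulr_sumr l_sum1 m_sum0 mulr0 subr0.
- move=> j; rewrite -(l_sumx j) -(m_sumy j) scaler_sumr -sumrB.
  by apply: eq_bigr => k _; rewrite scalerBl scalerA.
Qed.

Definition support l := [set k | l k != 0].

Lemma notin_support l k : k \notin support l -> l k = 0.
Proof. by rewrite inE negbK => /eqP. Qed.

Lemma fiber_weights_gt0 g l x k : fiber_weights g l x -> k \in support l -> 0 < l k.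
Proof. by case=> l_ge0 _ _; rewrite inE lt_def l_ge0 andbT. Qed.

Definition direction_free g (S : {set 'I_n}) :=
  forall m y, fiber_direction g m y -> {subset support m <= S} -> forall k, m k = 0.

Definition avoidable g i := exists l x, fiber_weights g l x /\ l i = 0.

Lemma fiber_weights_reduce g l x m y : fiber_weights g l x -> fiber_direction g m y ->
    (exists k, m k != 0) -> {subset support m <= support l} ->
  exists l' x', fiber_weights g l' x' /\ (#|support l'| < #|support l|)%N.
Proof.
move=> fl fm [k0 mk0] sub_ml.
have m_gt0 : exists k, 0 < m k.
  case: (ltgtP (m k0) 0) => [/(fiber_direction_gt0 fm) // | mk0_gt0 | mk0_0].
    by exists k0.
  by rewrite mk0_0 eqxx in mk0.
have l_gt0 k : 0 < m k -> 0 < l k.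
  by move=> mk; apply: fiber_weights_gt0 fl _; apply: sub_ml; rewrite inE gt_eqF.
have [t [i0 [mi0 li0] fl']] := fiber_weights_step fl fm m_gt0 l_gt0.
exists (fun k => l k - t * m k), (x - t *: y); split=> //.
have i0l : i0 \in support l by apply: sub_ml; rewrite inE gt_eqF.
rewrite (cardsD1 i0 (support l)) i0l add1n ltnS; apply: subset_leq_card.
apply/subsetP => k; rewrite !inE.
have [-> | ki0 /=] := eqVneq k i0; first by rewrite li0 eqxx.
apply: contraNN => /eqP lk0; rewrite lk0 (@notin_support m k) ?mulr0 ?subr0 //.
by apply/negP => /sub_ml; rewrite inE lk0 eqxx.
Qed.

Section DirectionSystem.
Variables (P : {set {set 'I_n}}) (S : {set 'I_n}).

Definition direction_eqn : finType :=
  ({B : {set 'I_n} | B \in P} * option 'I_d + {k : 'I_n | k \notin S})%type.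

(* Unknowns [inl k] stand for [m k] and [inr c] for [y 0 c]. Equation [(B, None)]
   says that [m] sums to 0 on [B], equation [(B, Some c)] that coordinate [c] of
   [\sum_(k in B) m k *: p k] is [y 0 c], and equation [k] that [m k = 0]. *)
Definition direction_coef (e : direction_eqn) (u : 'I_n + 'I_d) : R :=
  match e, u with
  | inl (B, None), inl k => (k \in val B)%:R
  | inl (B, Some c), inl k => (k \in val B)%:R * p k 0 c
  | inl (B, Some c), inr c' => - (c' == c)%:R
  | inr k0, inl k => (k == val k0)%:R
  | _, _ => 0
  end.

Lemma card_direction_eqn : (0 < #|P|)%N -> (Tv d #|P| < #|S|)%N ->
  (#|direction_eqn| < #|{: 'I_n + 'I_d}|)%N.
Proof.
move=> P_gt0 S_big.
rewrite card_sum card_prod card_option !card_sig card_sum !card_ord.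
have -> : #|[pred B : {set 'I_n} | B \in P]| = #|P| by [].
have -> : #|[pred k : 'I_n | k \notin S]| = #|~: S| by apply: eq_card => k; rewrite !inE.
have := cardsC S; have := max_card S; rewrite card_ord.
move: S_big; rewrite /Tv; case: #|P| P_gt0 => // r _; rewrite subn1 /= mulnS.
lia.
Qed.

Variable v : 'I_n + 'I_d -> R.
Hypothesis v_sol : forall e, \sum_u v u * direction_coef e u = 0.

Lemma direction_eqn_out k : k \notin S -> v (inl k) = 0.
Proof.
move=> kS; have := v_sol (inr (exist _ k kS)).
rewrite big_sumType /= [X in _ + X]big1 => [|c _]; last by rewrite mulr0.
by rewrite (bigD1 k) //= eqxx mulr1 big1 ?addr0 // => k' /negbTE ->; rewrite mulr0.
Qed.

Lemma direction_eqn_sum0 B : B \in P -> \sum_(k in B) v (inl k) = 0.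
Proof.
move=> PB; have := v_sol (inl (exist _ B PB, None)).
rewrite big_sumType /= [X in _ + X]big1 => [|c _]; last by rewrite mulr0.
rewrite addr0 => sum0; rewrite -[RHS]sum0 big_mkcond; apply: eq_bigr => k _.
by case: (k \in B); rewrite ?mulr1 ?mulr0.
Qed.

Lemma direction_eqn_sumy B c : B \in P -> \sum_(k in B) v (inl k) * p k 0 c = v (inr c).
Proof.
move=> PB; have := v_sol (inl (exist _ B PB, Some c)).
rewrite big_sumType /= (bigD1 c) //= eqxx.
rewrite [X in _ + (_ + X)]big1 => [|c' /negbTE ->]; last by rewrite oppr0 mulr0.
rewrite mulrN1 addr0 => /eqP; rewrite subr_eq0 => /eqP <-.
rewrite big_mkcond; apply: eq_bigr => k _.
by case: (k \in B); rewrite /= ?mul1r ?mul0r ?mulr0.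
Qed.

End DirectionSystem.

Lemma fiber_direction_exists P (S : {set 'I_n}) :
  partition P setT -> (0 < #|P|)%N -> (Tv d #|P| < #|S|)%N ->
  exists m y, [/\ fiber_direction (pblock P) m y, exists k, m k != 0 &
                  {subset support m <= S}].
Proof.
move=> partP P_gt0 S_big.
have [v [u vu] v_sol] :=
  underdetermined_solution (@direction_coef P S) (card_direction_eqn P_gt0 S_big).
have [/eqP coverP tiP _] := and3P partP.
have mem_pblockE j k : (k \in pblock P j) = (pblock P k == pblock P j).
  by rewrite eq_sym eq_pblock // coverP inE.
exists (fun k => v (inl k)), (\row_c v (inr c)); split.
- split=> j.
    rewrite -[RHS](direction_eqn_sum0 v_sol (pblockT partP j)).
    by apply: eq_bigl => k; rewrite mem_pblockE.
  apply/rowP => c; rewrite summxE mxE -(direction_eqn_sumy v_sol _ (pblockT partP j)).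
  by apply: eq_big => [k | k _]; rewrite ?mem_pblockE // mxE.
- case: u vu => [k | c] vu; first by exists k.
  apply/existsP; apply: contraNT vu; rewrite negb_exists => /forallP m0.
  have [B PB] : exists B, B \in P by apply/set0Pn; rewrite -card_gt0.
  rewrite -(direction_eqn_sumy v_sol _ PB) big1 // => k _.
  by have /negPn/eqP -> := m0 k; rewrite mul0r.
- move=> k; apply: contraTT => /(direction_eqn_out v_sol) vk0.
  by rewrite inE vk0 eqxx.
Qed.

Lemma fiber_weights_direction_free g l x : fiber_weights g l x ->
  exists l' x', fiber_weights g l' x' /\ direction_free g (support l').
Proof.
move=> fl; have [N] := ubnP #|support l|; elim: N l x fl => // N IH l x fl supp_lt.
have [[m [y [fm m_nz sub_ml]]] | no_dir] := EM (exists m y, [/\ fiber_direction g m y,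
    exists k, m k != 0 & {subset support m <= support l}]).
  have [l' [x' [fl' lt_l'l]]] := fiber_weights_reduce fl fm m_nz sub_ml.
  exact: IH fl' (leq_trans lt_l'l _).
exists l, x; split=> // m y fm sub_ml k; apply/eqP; apply: contraT => mk.
by case: no_dir; exists m, y; split=> //; exists k.
Qed.

Lemma direction_free_card P (S : {set 'I_n}) : partition P setT -> (0 < #|P|)%N ->
  direction_free (pblock P) S -> (#|S| <= Tv d #|P|)%N.
Proof.
move=> partP P_gt0 freeS; rewrite leqNgt; apply/negP => S_big.
have [m [y [fm [k mk] sub_mS]]] := fiber_direction_exists partP P_gt0 S_big.
by rewrite (freeS m y) ?eqxx in mk.
Qed.

Lemma fiber_weights_exchange g l x m y z : fiber_weights g l x ->
    direction_free g (support l) -> fiber_direction g m y -> (exists k, m k != 0) ->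
    {subset support m <= z |: support l} ->
  exists2 i0, i0 \in support l & exists l' x', fiber_weights g l' x' /\ l' i0 = 0.
Proof.
move=> fl free_l fm [k mk] sub_m.
have mz : m z != 0.
  apply: contra_neq mk => mz0; apply: (free_l m y fm) => j jm.
  by have /setU1P[jz | //] := sub_m j jm; move: jm; rewrite inE jz mz0 eqxx.
(* Since [l z = 0], the walk along [- m'] must raise the weight of [z]. *)
have [m' [y' [fm' m'z sub_m']]] : exists m' y', [/\ fiber_direction g m' y',
    m' z < 0 & {subset support m' <= z |: support l}].
  case: (ltgtP (m z) 0) => [mz_lt0 | mz_gt0 | mz0]; first by exists m, y.
    exists (fun k => - m k), (- y).
    split; [exact: fiber_directionN | by rewrite oppr_lt0 |].
    by move=> j; rewrite inE oppr_eq0 => mj; apply: sub_m; rewrite inE.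
  by rewrite mz0 eqxx in mz.
have l_gt0 j : 0 < m' j -> 0 < l j.
  move=> m'j; apply: fiber_weights_gt0 fl _.
  have : j \in support m' by rewrite inE gt_eqF.
  case/sub_m'/setU1P => [jz | //].
  by rewrite jz ltNge ltW in m'j.
have [t [i0 [m'i0 li0] fl']] :=
  fiber_weights_step fl fm' (fiber_direction_gt0 fm' m'z) l_gt0.
exists i0; first by rewrite inE gt_eqF ?l_gt0.
by exists (fun k => l k - t * m' k), (x - t *: y').
Qed.

Lemma avoidable_core P : partition P setT -> (0 < #|P|)%N -> (Tv d #|P| < n)%N ->
    (exists l x, fiber_weights (pblock P) l x) ->
  exists2 C : {set 'I_n}, (#|C| < Tv d #|P|)%N &
    {in ~: C, forall i, avoidable (pblock P) i}.
Proof.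
move=> partP P_gt0 Tv_lt_n [l0 [x0 fl0]].
have [l [x [fl free_l]]] := fiber_weights_direction_free fl0.
have supp_le := direction_free_card partP P_gt0 free_l.
have [supp_lt | supp_ge] := ltnP #|support l| (Tv d #|P|).
  by exists (support l) => // i; rewrite in_setC => /notin_support li; exists l, x.
have [z zl] : exists z, z \notin support l.
  apply/existsP; rewrite -negb_forall; apply/negP => /forallP all_l.
  have /subset_leq_card : [set: 'I_n] \subset support l.
    by apply/subsetP => k _; apply: all_l.
  by rewrite cardsT card_ord leqNgt (leq_ltn_trans supp_le).
have S_big : (Tv d #|P| < #|z |: support l|)%N by rewrite cardsU1 zl add1n ltnS.
have [m [y [fm m_nz sub_m]]] := fiber_direction_exists partP P_gt0 S_big.
have [i0 i0l [l' [x' [fl' l'i0]]]] := fiber_weights_exchange fl free_l fm m_nz sub_m.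
exists (support l :\ i0); first by move: supp_le; rewrite (cardsD1 i0) i0l add1n.
move=> i; rewrite !inE negb_and !negbK => /orP[/eqP -> | /eqP li]; last by exists l, x.
by exists l', x'.
Qed.

Lemma avoidable_partner g i : avoidable g i -> exists2 a, a != i & g a = g i.
Proof.
case=> l [x [[_ l_sum1 _] li]].
have [a /andP[ai /eqP gai] | alone] := pickP (fun a => (a != i) && (g a == g i)).
  by exists a.
have := l_sum1 i; rewrite (bigD1 i) //= li add0r big1 => [/esym/eqP | k /andP[gk ki]].
  by rewrite oner_eq0.
by have := alone k; rewrite ki gk.
Qed.

Lemma tverberg_move_part P i B : partition P setT -> avoidable (pblock P) i ->
    B != pblock P i -> B \in P ->
  tverberg_partition p #|P| (move_part P i B) /\ part_dist P (move_part P i B) = 1%N.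
Proof.
move=> partP avoid_i BPi PB.
have [a ai gai] := avoidable_partner avoid_i.
have [l [x [fl li]]] := avoid_i.
split; last by rewrite part_dist_move_part.
split.
  by rewrite /is_rpartition preim_partitionP (card_move_part partP PB ai gai) eqxx.
by exists x; apply: in_conv_fiber_weights (fiber_weights_move partP fl li PB).
Qed.

Lemma moves_sub_tv_neighbors P (D : {set 'I_n}) : partition P setT ->
    {in D, forall i, avoidable (pblock P) i} ->
  [set move_part P x.1 x.2 | x in move_pairs P D] \subset
  [set Q | `[< tverberg_partition p #|P| Q >] && (part_dist P Q == 1)%N].
Proof.
move=> partP avoidD; apply/subsetP => _ /imsetP[[i B] /[!inE] /and3P[iD BPi PB] ->].
have [tvQ ->] := tverberg_move_part partP (avoidD i iD) BPi PB.
by rewrite eqxx andbT; apply/asboolP.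
Qed.

Lemma tv_neighbors_sub_moves P : partition P setT ->
  [set Q | `[< tverberg_partition p #|P| Q >] && (part_dist P Q == 1)%N] \subset
  [set move_part P x.1 x.2 | x in move_pairs P setT].
Proof.
move=> partP; apply/subsetP => Q /[!inE].
case/andP => /asboolP[/andP[partQ /eqP cardQ] _] /eqP distQ.
have [x x_move ->] := part_dist1_move partP partQ cardQ distQ.
exact: imset_f.
Qed.

End FiberWeights.

Theorem theorem1p5 (R : realType) (d r n : nat) (p : 'I_n -> 'rV[R]_d) :
  (0 < r)%N -> (0 < d)%N -> injective p -> (Tv d r < n)%N ->
  forall P : {set {set 'I_n}}, tverberg_partition p r P ->
    ((n.+1 - Tv d r) * (r - 1) <= tv_degree p r P <= n * (r - 1))%N.
Proof.
move=> r_gt0 _ _ Tv_lt_n P [/andP[partP /eqP cardP] commonP]; subst r.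
have [C C_small C_avoid] :=
  avoidable_core partP r_gt0 Tv_lt_n (fiber_weights_pblock partP commonP).
rewrite /tv_degree; apply/andP; split.
- apply: leq_trans (subset_leq_card (moves_sub_tv_neighbors partP C_avoid)).
  have partner i : i \in ~: C -> exists2 a, a != i & pblock P a = pblock P i.
    by move/C_avoid/avoidable_partner.
  rewrite (card_in_imset (move_part_inj_on partP partner)) card_move_pairs //.
  by rewrite leq_mul2r (cardsCs (~: C)) setCK card_ord -[n - _]subSS leq_sub2l ?orbT.
- rewrite (leq_trans (subset_leq_card (tv_neighbors_sub_moves p partP))) //.
  by rewrite (leq_trans (leq_imset_card _ _)) // card_move_pairs // cardsT card_ord.
Qed.
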